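(* Let $X_1,\ldots,X_n$ be independent and uniformly distributed on $\{1,\ldots,n\}$ under $\mathbb{P}$, let $Y_q:=\#\{1\le i\le n:q\mid X_i\}$ for primes $q$, and $S(k,n):=\{q\in\mathcal{P}:k<q\le n\}$. Then for every $\epsilon>0$, \[ \limsup_{k\to\infty}\limsup_{n\to\infty}\frac{1}{n}\log\mathbb{P}\left(\sum_{q\in S(k,n)}Y_{q}^{2}>n^{2}\epsilon\right)=-\infty. \]
   Context: $\mathcal{P}$ denotes the set of primes. *)

From Stdlib Require Import Reals.
From mathcomp Require Import all_boot.

(* A sample point (X_1,...,X_n) in {1..n}^n is encoded as x : {ffun 'I_n -> 'I_n},
   with X_(i+1) = (x i).+1. *)

Definition Yq (n q : nat) (x : {ffun 'I_n -> 'I_n}) : nat :=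
  #|[set i : 'I_n | q %| (x i).+1]|.

Definition sumSq (n k : nat) (x : {ffun 'I_n -> 'I_n}) : nat :=
  \sum_(k.+1 <= q < n.+1 | prime q) expn (Yq n q x) 2.

Definition Rltb (a b : R) : bool := if Rlt_dec a b then true else false.

Definition probEvent (n k : nat) (eps : R) : R :=
  Rdiv (INR #|[set x : {ffun 'I_n -> 'I_n} | Rltb (Rmult (Rmult (INR n) (INR n)) eps) (INR (sumSq n k x))]|)
       (INR #|{ffun 'I_n -> 'I_n}|).

From Stdlib Require Import Reals ZArith Lra Lia Psatz.
From mathcomp Require Import all_boot zify.
Set Warnings "-notation-overridden".

(* Fix j, put D := 3^j, and call a prime q of S(k,n)
   heavy for x when 3Dn <= q Y_q(x); Z(x) is the sum of Y_q over heavy q.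
   1. Deterministic split (sumSq_split): heavy primes satisfy Y_q^2 <= n Y_q,
      light ones Y_q^2 q^2 < (3Dn)^2, and \sum_{q>k} q^(-2) <= 1/k, so
      k \sum Y_q^2 <= k n Z + (3Dn)^2.  Hence, once k >= 2 (3D)^2 / eps, the
      event \sum Y_q^2 > eps n^2 forces Z > eps n / 2 (bad_forces_heavy).
   2. Exponential moment (moment_bound): \sum_x D^Z(x) <= 2^(n+1) n^n.  D^Z(x) is
      bounded by a product over q of sums over index sets I \subseteq S_q(x);
      expanding, a family (I_q) makes each X_i a multiple of the product of the
      distinct primes q with i \in I_q, which leaves at most n^n / \prod q^|I_q|
      points (card_prescribed), and the binomial theorem over subsets bounds the
      resulting factor of each prime by 2 (H_le).
   3. Markov's inequality (probEvent_le) gives P <= exp(n + 1 - j eps n / 2),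
      which is < exp(n M) for every n >= 1 as soon as j eps / 2 > 2 - M. *)

Lemma count_multiples n L : 0 < L -> \sum_(m < n) (L %| m.+1) = n %/ L.
Proof.
move=> L_gt0; elim: n => [|n IHn]; first by rewrite big_ord0 div0n.
by rewrite big_ord_recr /= IHn divnS // addnC.
Qed.

Lemma card_multiples_le n L (A : {pred 'I_n}) : 0 < L ->
  (forall m, m \in A -> L %| m.+1) -> #|A| * L <= n.
Proof.
move=> L_gt0 A_dvd; apply: leq_trans (leq_divM n L); rewrite leq_mul2r.
apply/orP; right; rewrite -count_multiples // -sum1_card big_mkcond /=.
by apply: leq_sum => m _; case: ifP => // /A_dvd ->.
Qed.

Lemma prod_primes_dvd s m : uniq s -> all prime s -> all (dvdn^~ m) s ->
  \prod_(p <- s) p %| m.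
Proof.
elim: s => [|p s IHs] /=; first by rewrite big_nil dvd1n.
move=> /andP[p_notin_s s_uniq] /andP[p_pr s_pr] /andP[p_dvd s_dvd].
rewrite big_cons Gauss_dvd ?p_dvd ?IHs //.
elim: s p_notin_s s_pr {IHs s_uniq s_dvd} => [|r s IHs]; first by rewrite big_nil coprimen1.
rewrite inE negb_or big_cons /= => /andP[p_neq_r p_notin_s] /andP[r_pr s_pr].
by rewrite coprimeMr IHs // andbT prime_coprime // dvdn_prime2.
Qed.

Lemma sum_subsets_binomial n a b :
  \sum_(J : {set 'I_n}) a ^ #|J| * b ^ (n - #|J|) = (a + b) ^ n.
Proof.
rewrite -[n in RHS]card_ord -prod_nat_const bigA_distr; apply: eq_bigr => J _.
rewrite (bigID (mem J)) /= (eq_bigr (fun _ => a)) => [|i -> //].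
rewrite [\prod_(i | _ \notin _) _](eq_bigr (fun _ => b)) => [|i /negbTE -> //].
rewrite !prod_nat_const; congr (_ * _ ^ _).
have -> : #|[pred i | i \notin J]| = #|~: J| by apply: eq_card => i; rewrite !inE.
by rewrite cardsCs setCK card_ord.
Qed.

Lemma tail_sum_bound k N m (a : nat -> nat) : 0 < k ->
  (forall q, k < q -> a q * (q * q) <= N) ->
  k * \sum_(k.+1 <= q < m.+1) a q <= N.
Proof.
move=> k_gt0 a_le.
have partial d : k * (k + d) * \sum_(k.+1 <= q < (k + d).+1) a q <= N * d.
  elim: d => [|d IHd]; first by rewrite addn0 big_geq // muln0.
  rewrite addnS big_nat_recr /=; last by lia.
  set S := \sum_(_ <= _ < _) _; set p := (k + d).+1.
  have last_le : a p * (p * p) <= N by apply: a_le; lia.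
  have last_scaled : k * (a p * ((k + d) * p)) <= k * N.
    rewrite leq_mul2l; apply/orP; right; apply: leq_trans last_le.
    by rewrite leq_mul2l leq_mul2r leqnSn !orbT.
  have IHd_scaled : p * (k * (k + d) * S) <= p * (N * d) by rewrite leq_mul2l IHd orbT.
  have : (k + d) * (k * p * (S + a p)) <= (k + d) * (N * d.+1) by lia.
  by rewrite leq_mul2l => /orP[|//]; lia.
case: (leqP m k) => [m_le_k | k_lt_m]; first by rewrite big_geq // muln0.
have := partial (m - k); rewrite subnKC ?(ltnW k_lt_m) // => bound.
have : k * m * \sum_(k.+1 <= q < m.+1) a q <= N * m.
  by apply: leq_trans bound _; rewrite leq_mul2l leq_subr orbT.
by rewrite mulnAC leq_pmul2r //; lia.
Qed.

Section RealBounds.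
Local Open Scope R_scope.

Lemma INR_expn (m e : nat) : INR (m ^ e)%N = INR m ^ e.
Proof.
elim: e => [|e IHe]; first by rewrite expn0.
by rewrite expnS mult_INR IHe -tech_pow_Rmult.
Qed.

Lemma pow_exp (x : R) (m : nat) : exp x ^ m = exp (INR m * x).
Proof.
elim: m => [|m IHm]; first by rewrite /= Rmult_0_l exp_0.
rewrite S_INR -tech_pow_Rmult IHm -exp_plus; congr exp; lra.
Qed.

Lemma exp_le_exp (x y : R) : x <= y -> exp x <= exp y.
Proof. by case=> [/exp_increasing/Rlt_le | ->] //; exact: Rle_refl. Qed.

Lemma exp_le_pow3 (m : nat) : exp (INR m) <= 3 ^ m.
Proof.
rewrite -[INR m]Rmult_1_r -pow_exp; apply: pow_incr.
by split; [apply: Rlt_le; apply: exp_pos | exact: exp_le_3].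
Qed.

Lemma pow2_le_exp (m : nat) : 2 ^ m <= exp (INR m).
Proof.
rewrite -[INR m]Rmult_1_r -pow_exp; apply: pow_incr.
by have := exp_ineq1_le 1; lra.
Qed.

(* (1 + s/q)^n <= e^(sn/q) <= 3^t as soon as sn <= qt. *)
Lemma growth_bound (q s n t : nat) : (0 < q)%N -> (s * n <= q * t)%N ->
  ((q + s) ^ n <= 3 ^ t * q ^ n)%N.
Proof.
move=> /ltP/lt_0_INR q_pos /leP/le_INR; rewrite !mult_INR => st_le.
apply/leP/INR_le; rewrite mult_INR !INR_expn plus_INR.
have -> : INR q + INR s = (1 + INR s / INR q) * INR q by field; lra.
rewrite Rpow_mult_distr; apply: Rmult_le_compat_r; first by apply: pow_le; lra.
have ratio_ge0 : 0 <= INR s / INR q.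
  by apply: Rmult_le_pos; [apply: pos_INR | apply: Rlt_le; apply: Rinv_0_lt_compat].
apply: Rle_trans (_ : exp (INR s / INR q) ^ n <= _).
  by apply: pow_incr; split; [lra | exact: exp_ineq1_le].
have -> : INR 3 = 3 by simpl; lra.
rewrite pow_exp; apply: Rle_trans (exp_le_pow3 t); apply: exp_le_exp.
apply: (Rmult_le_reg_r (INR q)) => //.
have -> : INR n * (INR s / INR q) * INR q = INR s * INR n by field; lra.
lra.
Qed.

Lemma nat_ceiling (r : R) :
  exists m : nat, r <= INR m /\ forall p : nat, r < INR p -> (m <= p)%N.
Proof.
have [up_gt up_le] := archimed r.
exists (Z.to_nat (up r)); split.
  case: (Z.le_gt_cases 0 (up r)) => [up_ge0 | up_neg].
    by rewrite INR_IZR_INZ Z2Nat.id //; lra.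
  have -> : Z.to_nat (up r) = 0%N by lia.
  by have := IZR_lt _ _ up_neg; simpl; lra.
move=> p r_lt_p; rewrite leqNgt; apply/negP => /ltP p_lt.
have : (Z.of_nat p + 1 <= up r)%Z by lia.
by move/IZR_le; rewrite plus_IZR -INR_IZR_INZ; lra.
Qed.
End RealBounds.

Definition Sq (n q : nat) (x : {ffun 'I_n -> 'I_n}) : {set 'I_n} :=
  [set i | q %| (x i).+1].

Definition heavy (n k C : nat) (x : {ffun 'I_n -> 'I_n}) : nat :=
  \sum_(k.+1 <= q < n.+1 | prime q && (C * n <= q * Yq n q x)) Yq n q x.

Lemma prod_nat_bool (I : finType) (b : I -> bool) : \prod_i (b i : nat) = [forall i, b i].
Proof.
case: (boolP [forall i, b i]) => [/forallP b_all | /forallPn [i /negbTE b_i]].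
  by rewrite big1 // => i _; rewrite b_all.
by rewrite (bigD1 i) //= b_i.
Qed.

Section ExponentialMoment.
Variables n k D : nat.

Definition candidate (q : nat) : bool := (k < q) && prime q.

(* The weight q of a candidate prime; working with weight q ^ n instead of
   q^(-|I|) keeps every inequality in nat. *)
Definition weight (q : nat) : nat := if candidate q then q else 1.

(* Coefficient of a set I of indices in the expansion of D ^ Z(x): the empty set,
   plus the heavy sets of a candidate prime, weighted by D^|I|. *)
Definition coef (q : nat) (I : {set 'I_n}) : nat :=
  (I == set0) + (candidate q && (3 * D * n <= q * #|I|)) * D ^ #|I|.

(* G x >= D ^ Z(x): one factor per q, summing coef over the subsets of S_q(x). *)
Definition G (x : {ffun 'I_n -> 'I_n}) : nat :=
  \prod_(q < n.+1) \sum_(I : {set 'I_n}) (I \subset Sq n q x) * coef q I.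

(* H q / weight q ^ n = \sum_I coef q I / weight q ^ |I|: the factor that q
   contributes to E[G] after averaging over the points. *)
Definition H (q : nat) : nat :=
  \sum_(I : {set 'I_n}) coef q I * weight q ^ (n - #|I|).

(* Prescribing f q \subset S_q(x) for all candidate primes forces X_i to be a
   multiple of the product of the q with i \in f q; at most n^n / \prod q^|f q|
   sample points do so. *)
Lemma card_prescribed (f : {ffun 'I_n.+1 -> {set 'I_n}}) :
  (forall q, f q != set0 -> candidate q) ->
  #|[set x | [forall q, f q \subset Sq n q x]]| * \prod_(q < n.+1) weight q ^ #|f q| <= n ^ n.
Proof.
move=> f_supp.
have cand i q : i \in f q -> candidate q by move=> iq; apply: f_supp; apply/set0Pn; exists i.
pose A i := [pred m : 'I_n | [forall q : 'I_n.+1, (i \in f q) ==> (q %| m.+1)]].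
have -> : #|[set x | [forall q, f q \subset Sq n q x]]| = #|family A|.
  apply: eq_card => x; rewrite inE; apply/forallP/familyP => x_ok.
    move=> i; apply/forallP => q; apply/implyP => iq.
    by have /subsetP /(_ i iq) := x_ok q; rewrite inE.
  move=> q; apply/subsetP => i iq; rewrite inE.
  by have /forallP /(_ q) /implyP /(_ iq) := x_ok i.
have -> : \prod_(q < n.+1) weight q ^ #|f q| = \prod_(i < n) \prod_(q | i \in f q) (q : nat).
  under eq_bigr do rewrite -prod_nat_const big_mkcond.
  rewrite exchange_big; apply: eq_bigr => i _; rewrite [RHS]big_mkcond.
  by apply: eq_bigr => q _; case: ifP => // /cand; rewrite /weight => ->.
rewrite card_family foldrE big_map big_enum /= -big_split /=.
rewrite -[n in n ^ n]card_ord -prod_nat_const; apply: leq_prod => i _.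
rewrite card_ord; apply: card_multiples_le => [|m Am].
  by apply: prodn_cond_gt0 => q /cand /andP[_ /prime_gt0].
rewrite -big_filter -(big_map val xpredT id).
apply: prod_primes_dvd.
- by rewrite map_inj_uniq ?filter_uniq ?index_enum_uniq //; exact: val_inj.
- apply/allP => p /mapP [q]; rewrite mem_filter => /andP[iq _] ->.
  by have /andP[_ ->] := cand _ _ iq.
- apply/allP => p /mapP [q]; rewrite mem_filter => /andP[iq _] ->.
  by have /forallP /(_ q) /implyP /(_ iq) := Am.
Qed.

Lemma sum_G_expand :
  \sum_x G x = \sum_(f : {ffun 'I_n.+1 -> {set 'I_n}})
     (\prod_(q < n.+1) coef q (f q)) * #|[set x | [forall q, f q \subset Sq n q x]]|.
Proof.
rewrite /G; under eq_bigr do rewrite bigA_distr_bigA.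
rewrite exchange_big; apply: eq_bigr => f _.
under eq_bigr do rewrite big_split /= prod_nat_bool.
rewrite -big_distrl /= mulnC; congr (_ * _).
rewrite -sum1_card [RHS]big_mkcond /=; apply: eq_bigr => x _.
by rewrite inE; case: [forall q, _].
Qed.

(* The weighted form of E[G] <= \prod_q \sum_I coef q I q^(-|I|). *)
Lemma sum_G_le :
  (\sum_x G x) * \prod_(q < n.+1) weight q ^ n <= n ^ n * \prod_(q < n.+1) H q.
Proof.
rewrite sum_G_expand /H bigA_distr_bigA big_distrl big_distrr /=.
apply: leq_sum => f _; set c := \prod_(q < n.+1) coef q (f q).
case: (posnP c) => [-> | c_gt0]; first by rewrite !mul0n.
have f_supp q : f q != set0 -> candidate q.
  move=> fq_neq0; move: c_gt0; rewrite /c (bigD1 q) //= /coef (negbTE fq_neq0).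
  by case: (candidate q).
have -> : \prod_(q < n.+1) weight q ^ n =
          \prod_(q < n.+1) weight q ^ #|f q| * \prod_(q < n.+1) weight q ^ (n - #|f q|).
  rewrite -big_split /=; apply: eq_bigr => q _; rewrite -expnD subnKC //.
  by rewrite -[n in _ <= n]card_ord max_card.
rewrite big_split /= -/c.
have prescribed_le := @card_prescribed f f_supp.
set N := #|_|; set w := \prod_q _; set r := \prod_q _.
have : c * r * (N * w) <= c * r * n ^ n by rewrite leq_mul2l prescribed_le orbT.
lia.
Qed.

(* Taking I = S_q(x) for each heavy prime shows D ^ Z(x) <= G x. *)
Lemma heavy_pow_le_G x : 0 < 3 * D * n -> D ^ heavy n k (3 * D) x <= G x.
Proof.
move=> CDn_gt0; rewrite /heavy big_geq_mkord expn_sum /G big_mkcond /=.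
apply: leq_prod => q _.
have empty_light : (3 * D * n <= q * 0) = false.
  by rewrite muln0 leqn0; apply/negbTE; rewrite -lt0n.
rewrite (bigD1 set0) //= sub0set /coef cards0 eqxx empty_light andbF /= mul1n.
case: ifP => [/andP[/andP[q_pr heavy_q] k_lt_q] | _]; last by rewrite leq_addr.
have Sq_neq0 : Sq n q x != set0.
  by apply: contraTneq heavy_q; rewrite /Yq -/(Sq n q x) => ->; rewrite cards0 empty_light.
rewrite (bigD1 (Sq n q x)) //= subxx (negbTE Sq_neq0) /candidate k_lt_q q_pr.
rewrite (heavy_q : _ <= q * #|Sq n q x|) mul0n addn0 mul1n add0n mul1n.
by apply: leq_trans (leq_addl 1 _) _; rewrite leq_add2l leq_addr.
Qed.

(* Heavy sets have |I| >= t := ceil(3Dn/q); multiplying by 3^t and applying the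
   binomial theorem, their total weight is at most 3^(-t) (q + 3D)^n <= q^n. *)
Lemma heavy_sets_bound q : 0 < q ->
  \sum_(I : {set 'I_n}) (3 * D * n <= q * #|I|) * D ^ #|I| * q ^ (n - #|I|) <= q ^ n.
Proof.
move=> q_gt0; set t := (3 * D * n + q.-1) %/ q.
have t_least y : 3 * D * n <= q * y -> t <= y by move=> ?; rewrite -ltnS ltn_divLR //; lia.
have t_heavy : 3 * D * n <= q * t.
  by have := divn_eq (3 * D * n + q.-1) q; have := ltn_pmod (3 * D * n + q.-1) q_gt0; lia.
rewrite -(leq_pmul2l (expn_gt0 3 t)) big_distrr /=.
apply: leq_trans (_ : \sum_(I : {set 'I_n}) (3 * D) ^ #|I| * q ^ (n - #|I|) <= _).
  apply: leq_sum => I _; case heavy_I: (3 * D * n <= q * #|I|); last by rewrite !mul0n muln0.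
  rewrite mul1n mulnA expnMn leq_mul2r leq_mul2r leq_pexp2l ?t_least ?orbT //.
by rewrite sum_subsets_binomial addnC growth_bound //; lia.
Qed.

Lemma H_le q : H q <= 2 * weight q ^ n.
Proof.
rewrite /H /coef /weight; case: (boolP (candidate q)) => cand_q; last first.
  rewrite (bigD1 set0) //= eqxx big1 ?exp1n // => I /negbTE ->.
  by rewrite mul0n.
under eq_bigr do rewrite mulnDl.
rewrite big_split /= mul2n -addnn leq_add //.
  rewrite (bigD1 set0) //= eqxx cards0 subn0 big1 ?mul1n ?addn0 // => I /negbTE ->.
  by rewrite mul0n.
by apply: heavy_sets_bound; move: cand_q => /andP[_ /prime_gt0].
Qed.

Lemma moment_bound : 0 < n -> 0 < D ->
  \sum_x D ^ heavy n k (3 * D) x <= n ^ n * 2 ^ n.+1.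
Proof.
move=> n_gt0 D_gt0.
have w_gt0 : 0 < \prod_(q < n.+1) weight q ^ n.
  by apply: prodn_gt0 => q; rewrite expn_gt0 /weight; case: ifP => [/andP[_ /prime_gt0 ->] | ].
have moment_le_G : \sum_x D ^ heavy n k (3 * D) x <= \sum_x G x.
  by apply: leq_sum => x _; apply: heavy_pow_le_G; lia.
rewrite -(leq_pmul2r w_gt0); apply: leq_trans (leq_mul moment_le_G (leqnn _)) _.
apply: leq_trans sum_G_le _; rewrite -mulnA.
have -> : 2 ^ n.+1 * \prod_(q < n.+1) weight q ^ n = \prod_(q < n.+1) (2 * weight q ^ n).
  by rewrite big_split /= prod_nat_const card_ord.
by rewrite leq_mul2l; apply/orP; right; apply: leq_prod => q _; apply: H_le.
Qed.
End ExponentialMoment.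

(* Deterministic split: heavy primes give Y_q^2 <= n Y_q, light primes give
   Y_q^2 q^2 < (Cn)^2, whose sum over q > k is at most (Cn)^2 / k. *)
Lemma sumSq_split n k C x : 0 < k ->
  k * sumSq n k x <= k * n * heavy n k C x + (C * n) ^ 2.
Proof.
move=> k_gt0.
have Y_le q : Yq n q x <= n by rewrite /Yq -[n in _ <= n]card_ord max_card.
rewrite /sumSq /heavy (bigID (fun q => C * n <= q * Yq n q x)) /= mulnDr.
apply: leq_add.
  rewrite -mulnA leq_mul2l big_distrr /=; apply/orP; right.
  by apply: leq_sum => q _; rewrite -mulnn leq_mul2r Y_le orbT.
pose light q := if prime q && ~~ (C * n <= q * Yq n q x) then Yq n q x ^ 2 else 0.
have -> : \sum_(k.+1 <= q < n.+1 | prime q && ~~ (C * n <= q * Yq n q x)) Yq n q x ^ 2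
          = \sum_(k.+1 <= q < n.+1) light q by rewrite big_mkcond.
apply: tail_sum_bound => // q _; rewrite /light; case: ifP => // /andP[_].
rewrite -ltnNge => /ltnW light_q.
by rewrite -!mulnn mulnACA [Yq _ _ _ * q]mulnC leq_mul.
Qed.

Local Open Scope R_scope.

Lemma Rltb_lt a b : Rltb a b = true -> a < b.
Proof. by rewrite /Rltb; case: (Rlt_dec a b). Qed.

Lemma exists_nat_gt (r : R) : exists m : nat, r < INR m.
Proof. by have [m] := INR_archimed 1 r Rlt_0_1; exists m; lra. Qed.

Lemma bad_forces_heavy n k C eps x : 0 < eps -> (0 < n)%N -> (0 < k)%N ->
  2 * INR C ^ 2 <= INR k * eps ->
  INR n * INR n * eps < INR (sumSq n k x) -> eps * INR n / 2 < INR (heavy n k C x).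
Proof.
move=> eps_pos n_gt0 k_gt0 k_large bad.
have n_pos : 0 < INR n by apply/lt_0_INR/ltP.
have k_pos : 0 < INR k by apply/lt_0_INR/ltP.
have /leP/le_INR := sumSq_split n k C x k_gt0.
rewrite plus_INR INR_expn !mult_INR => split_le.
have light_le : (INR C * INR n) ^ 2 <= INR k * eps / 2 * (INR n * INR n).
  by rewrite Rpow_mult_distr; nra.
have : INR k * INR n * (eps * INR n / 2) < INR k * INR n * INR (heavy n k C x) by nra.
by apply: Rmult_lt_reg_l; nra.
Qed.

Lemma ratio_le_exp B N a b : 0 < N -> 0 <= B -> B * exp a <= N * exp b -> B / N <= exp (b - a).
Proof.
move=> N_pos B_ge0 le_Nb; rewrite /Rminus exp_plus exp_Ropp.
have := exp_pos a; have := exp_pos b => eb ea.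
apply: (Rmult_le_reg_r (N * exp a)); first by nra.
have -> : B / N * (N * exp a) = B * exp a by field; lra.
by have -> : exp b * / exp a * (N * exp a) = N * exp b by field; lra.
Qed.

(* Markov's inequality for D^Z with D = 3^j: on the bad event Z >= eps n / 2,
   so P <= E[D^Z] / D^(eps n / 2) <= 2^(n+1) e^(-j eps n / 2). *)
Lemma probEvent_le n k j eps : 0 < eps -> (0 < n)%N -> (0 < k)%N ->
  2 * INR (3 * 3 ^ j) ^ 2 <= INR k * eps ->
  probEvent n k eps <= exp (INR n.+1 - INR j * (eps * INR n / 2)).
Proof.
move=> eps_pos n_gt0 k_gt0 k_large.
set D := (3 ^ j)%N; set r := eps * INR n / 2.
have [m [r_le_m m_least]] := nat_ceiling r.
set Bad := [set x | Rltb (INR n * INR n * eps) (INR (sumSq n k x))].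
have heavy_Bad x : x \in Bad -> (m <= heavy n k (3 * D) x)%N.
  rewrite inE => /Rltb_lt bad; apply: m_least.
  exact: (bad_forces_heavy _ _ _ _ _ eps_pos n_gt0 k_gt0 k_large bad).
have count_le : (#|Bad| * D ^ m <= n ^ n * 2 ^ n.+1)%N.
  have D_gt0 : (0 < D)%N by rewrite expn_gt0.
  apply: leq_trans (moment_bound n k D n_gt0 D_gt0).
  rewrite -sum1_card big_distrl /= [X in (_ <= X)%N](bigID (mem Bad)) /=.
  by apply: leq_trans (leq_addr _ _); apply: leq_sum => x /heavy_Bad; rewrite mul1n; apply: leq_pexp2l.
move: count_le; rewrite /D -expnM => /leP/le_INR.
rewrite (mult_INR #|Bad|) (mult_INR (n ^ n)) !INR_expn => count_R.
rewrite /probEvent card_ffun !card_ord INR_expn.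
have n_pos : 0 < INR n by apply/lt_0_INR/ltP.
apply: ratio_le_exp; [exact: pow_lt | exact: pos_INR |].
have exp_le : exp (INR j * r) <= INR 3 ^ (j * m).
  have -> : INR 3 = 3 by simpl; lra.
  apply: Rle_trans (exp_le_pow3 _); apply: exp_le_exp; rewrite mult_INR.
  by apply: Rmult_le_compat_l; first exact: pos_INR.
have two_le : INR 2 ^ n.+1 <= exp (INR n.+1).
  by rewrite (_ : INR 2 = 2); [exact: pow2_le_exp | simpl; lra].
apply: Rle_trans (_ : INR #|Bad| * INR 3 ^ (j * m) <= _).
  by apply: Rmult_le_compat_l; first exact: pos_INR.
apply: Rle_trans count_R _; apply: Rmult_le_compat_l => //.
by apply: pow_le; apply: Rlt_le.
Qed.

Theorem theorem3p8 :
  forall eps : R, Rlt 0 eps ->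
  forall M : R, exists K : nat, forall k : nat, (K <= k)%nat ->
  exists N : nat, forall n : nat, (N <= n)%nat ->
    Rlt (probEvent n k eps) (exp (Rmult (INR n) M)).
Proof.
move=> eps eps_pos M.
(* j with j eps / 2 > 2 - M fixes D = 3^j; K then makes the light primes negligible. *)
have [j j_large] := exists_nat_gt (2 * (2 - M) / eps).
set C := INR (3 * 3 ^ j).
have [K K_large] := exists_nat_gt (2 * C ^ 2 / eps).
exists K => k K_le_k; exists 1%N => n n_gt0.
have C_pos : 0 < C by apply/lt_0_INR/ltP; rewrite muln_gt0 expn_gt0.
have k_large : 2 * C ^ 2 <= INR k * eps.
  have /le_INR K_le_k' : (K <= k)%coq_nat by apply/leP.
  have := Rmult_lt_compat_r eps _ _ eps_pos K_large.
  by rewrite (_ : 2 * C ^ 2 / eps * eps = 2 * C ^ 2); [nra | field; lra].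
have k_gt0 : (0 < k)%N by apply/ltP/INR_lt; rewrite /=; nra.
apply: Rle_lt_trans (probEvent_le _ _ j _ eps_pos n_gt0 k_gt0 k_large) _.
apply: exp_increasing.
have n_ge1 : 1 <= INR n by apply: (le_INR 1); apply/leP.
have := Rmult_lt_compat_r eps _ _ eps_pos j_large.
rewrite S_INR (_ : 2 * (2 - M) / eps * eps = 2 * (2 - M)); [nra | field; lra].
Qed.
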